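(* Let $N, K \geq 2$ be integers, let $N_0>0$, $P>0$, $T>0$, fix $i\in\{1,\ldots,K\}$ and let $\mathbf{s}_k\in\mathbb{C}^N$ for $k\neq i$ be given. For $m=1,\ldots,N$ define $$\lambda^{(i)}_m = \sqrt{1+\tfrac12\cos(2\pi \tfrac mN)}\sum_{k=1,k\neq i}^K (\mathbf{s}_k^* Q_m \mathbf{s}_k),\qquad \hat\lambda^{(i)}_m = \sqrt{1+\tfrac12\cos(2\pi(\tfrac mN + \tfrac1{2N}))}\sum_{k=1,k\neq i}^K (\mathbf{s}_k^* \hat Q_m \mathbf{s}_k).$$ Let $\lambda^{(i)}_{\min}$ be the minimum eigenvalue of $\Sigma_i = \sum_{k\neq i}\sum_{m=1}^N[(\mathbf{s}_k^*Q_m\mathbf{s}_k)Q_m + (\mathbf{s}_k^*\hat Q_m\mathbf{s}_k)\hat Q_m]$, and let $$\operatorname{SINR}^\star_i = \max_{\mathbf{s}_i\in\mathbb{C}^N,\ \|\mathbf{s}_i\|^2=N} \left\{ \frac{1}{6N^2}\sum_{k=1, k\neq i}^K \sum_{m=1}^N S_m^{i,k} + \frac{N_0}{2PT}\right\}^{-1/2}.$$ Then $$\min_m \lambda^{(i)}_m + \min_m \hat\lambda^{(i)}_m \le \lambda^{(i)}_{\min} \le \gamma := \min\left\{\min_m \lambda^{(i)}_m + \max_m \hat\lambda^{(i)}_m,\ \max_m\lambda^{(i)}_m + \min_m\hat\lambda^{(i)}_m\right\},$$ and consequently $$\left\{\frac{\gamma}{6N} + \frac{N_0}{2PT}\right\}^{-1/2}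 \le \operatorname{SINR}^\star_i \le \left\{\frac{1}{6N}\left(\min_m \lambda^{(i)}_m + \min_m\hat\lambda^{(i)}_m\right) + \frac{N_0}{2PT}\right\}^{-1/2}.$$
   Context: Indices run over $1,\ldots,N$; $j$ is the imaginary unit and $\mathbf{z}^*$ denotes conjugate transpose. $V$ and $\hat V$ are the $N\times N$ unitary matrices with entries $V_{m,n} = \frac{1}{\sqrt N}\exp(-2\pi j \frac{mn}{N})$ and $\hat V_{m,n} = \frac{1}{\sqrt N}\exp\!\left(-2\pi j n(\frac{m}{N} + \frac{1}{2N})\right)$. For $m=1,\ldots,N$, $C_m$ (resp. $\hat C_m$) is the $N\times N$ diagonal matrix whose only nonzero entry is the $(m,m)$ entry, equal to $\sqrt{1+\frac12\cos(2\pi \frac mN)}$ (resp. $\sqrt{1+\frac12\cos(2\pi(\frac mN+\frac1{2N}))}$). Set $Q_m = V^* C_m V$ and $\hat Q_m = \hat V^* \hat C_m \hat V$. For $\mathbf{s}_i,\mathbf{s}_k\in\mathbb{C}^N$, $S_m^{i,k} = (\mathbf{s}_i^* Q_m \mathbf{s}_i)(\mathbf{s}_k^* Q_m \mathbf{s}_k) + (\mathbf{s}_i^* \hat Q_m \mathbf{s}_i)(\mathbf{s}_k^* \hat Q_m \mathbf{s}_k)$. *)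

From mathcomp Require Import all_boot all_order all_algebra.
From mathcomp Require Import reals trigo.
From mathcomp Require Export complex.
Set Implicit Arguments. Unset Strict Implicit. Unset Printing Implicit Defensive.
Import Order.TTheory GRing.Theory Num.Theory.
Local Open Scope ring_scope.
Local Open Scope complex_scope.

Section Defs.
Variable R : realType.
Variable N : nat.

Definition expj (t : R) : R[i] := (cos t)%:C + 'i * (sin t)%:C.

Definition adj (m n : nat) (A : 'M[R[i]]_(m, n)) : 'M[R[i]]_(n, m) :=
  (map_mx conjc A)^T.

(* indices m, n : 'I_N stand for the paper's indices m.+1, n.+1 in 1..N *)
Definition Vmx : 'M[R[i]]_N := \matrix_(m, n)
  ((Num.sqrt (N%:R : R))^-1%:C *
   expj (- (2 * pi * ((m.+1 * n.+1)%:R / N%:R)))).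

Definition Vhmx : 'M[R[i]]_N := \matrix_(m, n)
  ((Num.sqrt (N%:R : R))^-1%:C *
   expj (- (2 * pi * (n.+1)%:R * ((m.+1)%:R / N%:R + 1 / (2 * N%:R))))).

Definition cc (m : 'I_N) : R :=
  Num.sqrt (1 + 2^-1 * cos (2 * pi * ((m.+1)%:R / N%:R))).
Definition cch (m : 'I_N) : R :=
  Num.sqrt (1 + 2^-1 * cos (2 * pi * ((m.+1)%:R / N%:R + 1 / (2 * N%:R)))).

Definition Cmx (m : 'I_N) : 'M[R[i]]_N :=
  \matrix_(a, b) (if (a == m) && (b == m) then (cc m)%:C else 0).
Definition Chmx (m : 'I_N) : 'M[R[i]]_N :=
  \matrix_(a, b) (if (a == m) && (b == m) then (cch m)%:C else 0).

Definition Qmx (m : 'I_N) : 'M[R[i]]_N := adj Vmx *m Cmx m *m Vmx.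
Definition Qhmx (m : 'I_N) : 'M[R[i]]_N := adj Vhmx *m Chmx m *m Vhmx.

Definition qf (s : 'cV[R[i]]_N) (Q : 'M[R[i]]_N) : R[i] :=
  (adj s *m Q *m s) 0 0.

(* S_m^{i,k} with s_i = x, s_k = y *)
Definition Smik (x y : 'cV[R[i]]_N) (m : 'I_N) : R[i] :=
  qf x (Qmx m) * qf y (Qmx m) + qf x (Qhmx m) * qf y (Qhmx m).

(* minimum / maximum of a real function over 'I_N (meaningful for N >= 1) *)
Definition min_seq (s : seq R) : R :=
  if s is x :: t then foldr Num.min x t else 0.
Definition max_seq (s : seq R) : R :=
  if s is x :: t then foldr Num.max x t else 0.
Definition minI (f : 'I_N -> R) : R := min_seq [seq f m | m <- enum 'I_N].
Definition maxI (f : 'I_N -> R) : R := max_seq [seq f m | m <- enum 'I_N].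

Definition is_min_eigenvalue (A : 'M[R[i]]_N) (l : R) : Prop :=
  eigenvalue A (l%:C) /\ (forall a, eigenvalue A a -> l%:C <= a).

Definition is_max_on_sphere (f : 'cV[R[i]]_N -> R) (M : R) : Prop :=
  (exists x, (adj x *m x) 0 0 = (N%:R : R[i]) /\ f x = M) /\
  (forall x, (adj x *m x) 0 0 = (N%:R : R[i]) -> f x <= M).

End Defs.
Arguments Vmx {R N}.
Arguments Vhmx {R N}.
Arguments cc {R N}.
Arguments cch {R N}.
Arguments Cmx {R N}.
Arguments Chmx {R N}.
Arguments Qmx {R N}.
Arguments Qhmx {R N}.

(* The DFT matrices V and V̂ are unitary and Q_m = V^* C_m V is c_m times the projection
   onto the m-th coordinate in the basis V (likewise for Q̂_m), so
     x^* Σ_i x = ∑_m λ_m |(V x)_m|² + λ̂_m |(V̂ x)_m|².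
   Since ∑_m |(V x)_m|² = ∑_m |(V̂ x)_m|² = ‖x‖², the Rayleigh quotient of Σ_i is at least
   min λ + min λ̂; evaluating it at the column of V^* (resp. V̂^* ) indexed by an argmin of
   λ (resp. λ̂) bounds its minimum by min λ + max λ̂ (resp. max λ + min λ̂).  By the
   spectral theorem this minimum is the least eigenvalue of the Hermitian matrix Σ_i.
   Finally ∑_k ∑_m S_m^{i,k} = s_i^* Σ_i s_i, so the SINR objective is maximised on the
   sphere ‖s_i‖² = N by a rescaled least eigenvector, SINR* = (λ_min/(6N) + N0/(2PT))^(-1/2),
   and both bounds follow from the monotonicity of t ↦ (t/(6N) + N0/(2PT))^(-1/2). *)

From mathcomp Require Import all_boot all_order all_algebra.
From mathcomp Require Import reals trigo complex sesquilinear spectral.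
From mathcomp Require Import ring lra.
Set Implicit Arguments. Unset Strict Implicit. Unset Printing Implicit Defensive.
Import Order.TTheory GRing.Theory Num.Theory.
Local Open Scope ring_scope.
Local Open Scope complex_scope.

Local Notation sqnorm x := ((adj x *m x) 0 0).

(* [%:C] and [conjc] are not syntactically applications of a morphism
   structure, so the generic [rmorph*] lemmas do not rewrite them. *)
Section RealComplex.
Variable R : realType.
Implicit Types x y : R.

Lemma realcD x y : (x + y)%:C = x%:C + y%:C :> R[i]. Proof. exact: rmorphD. Qed.
Lemma realcM x y : (x * y)%:C = x%:C * y%:C :> R[i]. Proof. exact: rmorphM. Qed.
Lemma realc_nat (n : nat) : (n%:R : R)%:C = n%:R :> R[i]. Proof. exact: rmorph_nat. Qed.

Lemma conjcM (z w : R[i]) : conjc (z * w) = conjc z * conjc w.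
Proof. exact: rmorphM. Qed.

Lemma ger0_conjc (z : R[i]) : 0 <= z -> conjc z = z.
Proof. by move=> z_ge0; rewrite -(RRe_real (ger0_real z_ge0)) conjc_real. Qed.

Lemma ger0_Re (z : R[i]) : 0 <= z -> 0 <= complex.Re z.
Proof. by move=> z_ge0; rewrite -ler0c RRe_real ?ger0_real. Qed.

Lemma realcM_Re x (z : R[i]) : 0 <= z -> (x * complex.Re z)%:C = x%:C * z.
Proof. by move=> z_ge0; rewrite realcM RRe_real ?ger0_real. Qed.

End RealComplex.

Section ComplexExponential.
Variable R : realType.
Implicit Types t u : R.

Lemma expjE t : expj t = cos t +i* sin t.
Proof. by apply/eqP; rewrite eq_complex /=; apply/andP; split; apply/eqP; ring. Qed.

Lemma expjD t u : expj (t + u) = expj t * expj u.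
Proof.
rewrite !expjE cosD sinD; apply/eqP; rewrite eq_complex /=.
by apply/andP; split; apply/eqP; ring.
Qed.

Lemma expj0 : expj (0 : R) = 1.
Proof. by rewrite expjE cos0 sin0. Qed.

Lemma conjc_expj t : conjc (expj t) = expj (- t).
Proof. by rewrite !expjE cosN sinN. Qed.

Lemma expjMn (n : nat) t : expj (n%:R * t) = expj t ^+ n.
Proof.
elim: n => [|n IHn]; first by rewrite mul0r expj0 expr0.
by rewrite -natr1 mulrDl mul1r expjD IHn exprSr.
Qed.

Lemma expj_2pi_natr (k : nat) : expj (2 * pi * k%:R : R) = 1.
Proof. by rewrite mulrC expjMn expjE mulr_natl cos2pi sin2pi expr1n. Qed.

Lemma expj_neq1 t : t != 0 -> - (2 * pi) < t < 2 * pi -> expj t != 1.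
Proof.
move=> t_neq0 /andP[t_gtN t_lt]; apply/eqP => t1.
have sin_half0 : sin (t / 2) = 0.
  have : expj (t / 2) ^+ 2 = 1 by rewrite expr2 -expjD -splitr.
  by move/eqP; rewrite sqrf_eq1 expjE => /orP[] /eqP [_ ->] //; rewrite oppr0.
have pi_gt0 : 0 < pi :> R by exact: pi_gt0.
have [t_gt0|t_le0] := ltrP 0 t.
  by move: sin_half0; apply/eqP; rewrite gt_eqF // sin_gt0_pi //; lra.
have t_lt0 : t < 0 by rewrite lt_neqAle t_neq0.
by move: sin_half0; apply/eqP; rewrite -oppr_eq0 -sinN gt_eqF // sin_gt0_pi //; lra.
Qed.

End ComplexExponential.

Section DiscreteFourier.
Variables (R : realType) (N : nat).

Lemma natr_ord_gt0 (a : 'I_N) : 0 < N%:R :> R.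
Proof. by rewrite ltr0n (leq_ltn_trans (leq0n a)). Qed.

Lemma sum_expj_dft (a b : 'I_N) :
  \sum_(n < N) expj ((n.+1)%:R * (2 * pi * ((b%:R - a%:R) / N%:R)) : R)
  = (a == b)%:R * N%:R.
Proof.
have N_gt0 := natr_ord_gt0 a.
have [<-|a_neq_b] := eqVneq a b.
  rewrite subrr mul0r mulr0 mul1r.
  by under eq_bigr do rewrite mulr0 expj0; rewrite sumr_const card_ord.
set t := 2 * pi * _; under eq_bigr do rewrite expjMn.
have zN1 : expj t ^+ N = 1.
  rewrite -expjMn (_ : N%:R * t = 2 * pi * b%:R + - (2 * pi * a%:R)).
    by rewrite expjD -conjc_expj !expj_2pi_natr conjc1 mulr1.
  by rewrite /t; field; rewrite gt_eqF.
have z_neq1 : expj t != 1.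
  have pi_gt0 : 0 < pi :> R by exact: pi_gt0.
  have ab_neq0 : (b%:R - a%:R : R) != 0.
    by rewrite subr_eq0 eqr_nat eq_sym.
  have a_lt : (a%:R : R) < N%:R by rewrite ltr_nat.
  have b_lt : (b%:R : R) < N%:R by rewrite ltr_nat.
  have a_ge0 : (0 : R) <= a%:R by rewrite ler0n.
  have b_ge0 : (0 : R) <= b%:R by rewrite ler0n.
  have u_gt : -1 < (b%:R - a%:R) / N%:R :> R by rewrite ltr_pdivlMr // mulN1r; lra.
  have u_lt : (b%:R - a%:R) / N%:R < 1 :> R by rewrite ltr_pdivrMr //; lra.
  apply: expj_neq1; rewrite /t.
    by rewrite !mulf_neq0 //; rewrite ?invr_eq0 gt_eqF.
  by apply/andP; split; nra.
have geom0 : \sum_(n < N) expj t ^+ n = 0.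
  apply/eqP; move: (subrX1 (expj t) N); rewrite zN1 subrr => /esym/eqP.
  by rewrite mulf_eq0 subr_eq0 (negbTE z_neq1).
by under eq_bigr do rewrite exprS; rewrite -mulr_sumr geom0 mulr0 mul0r.
Qed.

Lemma phase_mx_unitary (M : 'M[R[i]]_N) (th : 'I_N -> 'I_N -> R) :
    (forall a n, M a n = (Num.sqrt (N%:R : R))^-1%:C * expj (th a n)) ->
    (forall a b n, th a n - th b n = (n.+1)%:R * (2 * pi * ((b%:R - a%:R) / N%:R))) ->
  M *m adj M = 1%:M.
Proof.
move=> ME thE; apply/matrixP => a b; rewrite !mxE.
have N_neq0 := lt0r_neq0 (natr_ord_gt0 a).
under eq_bigr => n _ do rewrite /adj !mxE !ME conjcM conjc_real
  conjc_expj mulrACA -realcM -invfM -expr2 sqr_sqrtr ?ler0n // -expjD thE.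
by rewrite -mulr_sumr sum_expj_dft mulrCA -[N%:R : R[i]]realc_nat -realcM mulVf // mulr1.
Qed.

Lemma Vmx_mul_adj : @Vmx R N *m adj Vmx = 1%:M.
Proof.
apply: (@phase_mx_unitary _ (fun a n => - (2 * pi * ((a.+1 * n.+1)%:R / N%:R)))).
  by move=> a n; rewrite mxE.
move=> a b n; have N_neq0 := lt0r_neq0 (natr_ord_gt0 a).
by rewrite !natrM -!natr1; field.
Qed.

Lemma Vhmx_mul_adj : @Vhmx R N *m adj Vhmx = 1%:M.
Proof.
apply: (@phase_mx_unitary _ (fun a n =>
  - (2 * pi * (n.+1)%:R * ((a.+1)%:R / N%:R + 1 / (2 * N%:R))))).
  by move=> a n; rewrite mxE.
move=> a b n; have N_neq0 := lt0r_neq0 (natr_ord_gt0 a).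
by rewrite -!natr1; field.
Qed.

End DiscreteFourier.

Section Adjoint.
Variable R : realType.

Lemma adjM m n p (A : 'M[R[i]]_(m, n)) (B : 'M_(n, p)) :
  adj (A *m B) = adj B *m adj A.
Proof. by rewrite /adj map_mxM trmx_mul. Qed.

Lemma adjK m n (A : 'M[R[i]]_(m, n)) : adj (adj A) = A.
Proof. by apply/matrixP => a b; rewrite /adj !mxE conjcK. Qed.

Lemma adjZ m n c (A : 'M[R[i]]_(m, n)) : adj (c *: A) = conjc c *: adj A.
Proof. by apply/matrixP => a b; rewrite /adj !mxE conjcM. Qed.

Lemma adjD m n (A B : 'M[R[i]]_(m, n)) : adj (A + B) = adj A + adj B.
Proof. by apply/matrixP => a b; rewrite /adj !mxE rmorphD. Qed.

Lemma adj0 m n : adj (0 : 'M[R[i]]_(m, n)) = 0.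
Proof. by apply/matrixP => a b; rewrite /adj !mxE conjc0. Qed.

Lemma adj_sum m n (I : Type) (r : seq I) (P : pred I) (F : I -> 'M[R[i]]_(m, n)) :
  adj (\sum_(j <- r | P j) F j) = \sum_(j <- r | P j) adj (F j).
Proof. exact: (big_morph _ (@adjD m n) (@adj0 m n)). Qed.

Lemma adj_single n (c : R) j :
  adj (\matrix_(a, b) (if (a == j) && (b == j) then c%:C else 0) : 'M_n) =
  \matrix_(a, b) (if (a == j) && (b == j) then c%:C else 0).
Proof.
apply/matrixP => a b; rewrite /adj !mxE andbC.
by case: (_ && _); rewrite ?conjc_real ?conjc0.
Qed.

Lemma adj_tstar m n (A : 'M[R[i]]_(m, n)) : (A ^t*)%sesqui = adj A.
Proof. by rewrite /adj map_trmx. Qed.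

End Adjoint.

Section MinMaxOrd.
Variable R : realType.

Lemma min_seq_mem (s : seq R) : s != [::] -> min_seq s \in s.
Proof.
case: s => [//|x t] _; elim: t => [|z t IHt]; first by rewrite inE.
move: IHt; rewrite /= !inE; have [_ _|_] := leP z (foldr Num.min x t).
  by rewrite eqxx orbT.
by case/orP => ->; rewrite ?orbT.
Qed.

Lemma min_seq_le (s : seq R) y : y \in s -> min_seq s <= y.
Proof.
case: s => [//|x t]; elim: t y => [|z t IHt] y; first by rewrite inE => /eqP ->.
rewrite /= in IHt *; rewrite !inE ge_min => /or3P[/eqP ->|/eqP ->|y_t].
- by rewrite IHt ?orbT ?inE ?eqxx.
- by rewrite lexx.
- by rewrite IHt ?orbT ?inE ?y_t ?orbT.
Qed.

Lemma max_seq_le (s : seq R) y : y \in s -> y <= max_seq s.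
Proof.
case: s => [//|x t]; elim: t y => [|z t IHt] y; first by rewrite inE => /eqP ->.
rewrite /= in IHt *; rewrite !inE le_max => /or3P[/eqP ->|/eqP ->|y_t].
- by rewrite IHt ?orbT ?inE ?eqxx.
- by rewrite lexx.
- by rewrite IHt ?orbT ?inE ?y_t ?orbT.
Qed.

Variable n : nat.
Implicit Types f : 'I_n -> R.

Lemma minI_le f j : minI f <= f j.
Proof. exact/min_seq_le/map_f/(mem_enum predT j). Qed.

Lemma maxI_ge f j : f j <= maxI f.
Proof. exact/max_seq_le/map_f/(mem_enum predT j). Qed.

Lemma minI_attained f : (0 < n)%N -> exists j, minI f = f j.
Proof.
move=> n_gt0; have /mapP[j _ ->] : minI f \in [seq f j | j <- enum 'I_n].
  by apply: min_seq_mem; rewrite -size_eq0 size_map size_enum_ord -lt0n.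
by exists j.
Qed.

Lemma minI_ge f c : (0 < n)%N -> (forall j, c <= f j) -> c <= minI f.
Proof. by move=> n_gt0 c_le; have [j ->] := minI_attained f n_gt0. Qed.

End MinMaxOrd.

Section QuadraticForm.
Variables (R : realType) (n : nat).
Implicit Types (x : 'cV[R[i]]_n) (A B M : 'M[R[i]]_n).

Lemma qfD x A B : qf x (A + B) = qf x A + qf x B.
Proof. by rewrite /qf mulmxDr mulmxDl mxE. Qed.

Lemma qfZ x c A : qf x (c *: A) = c * qf x A.
Proof. by rewrite /qf -scalemxAr -scalemxAl mxE. Qed.

Lemma qf0 x : qf x 0 = 0.
Proof. by rewrite /qf mulmx0 mul0mx mxE. Qed.

Lemma qf_sum x (I : Type) (r : seq I) (P : pred I) (F : I -> 'M[R[i]]_n) :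
  qf x (\sum_(j <- r | P j) F j) = \sum_(j <- r | P j) qf x (F j).
Proof. exact: (big_morph _ (qfD x) (qf0 x)). Qed.

Lemma qfZl x c A : qf (c *: x) A = conjc c * c * qf x A.
Proof. by rewrite /qf adjZ -!scalemxAl -scalemxAr scalerA mxE. Qed.

Lemma qf1 x : qf x 1%:M = sqnorm x.
Proof. by rewrite /qf mulmx1. Qed.

Lemma qf_adj_mul x M A : qf x (adj M *m A *m M) = qf (M *m x) A.
Proof. by rewrite /qf adjM !mulmxA. Qed.

Lemma qf_single x c j :
  qf x (\matrix_(a, b) (if (a == j) && (b == j) then c else 0)) =
  c * (conjc (x j 0) * x j 0).
Proof.
have -> : \matrix_(a, b) (if (a == j) && (b == j) then c else 0) =
          c *: (delta_mx j (0 : 'I_1) *m delta_mx 0 j) :> 'M_n.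
  rewrite mul_delta_mx; apply/matrixP => a b; rewrite !mxE.
  by case: (a == j); case: (b == j); rewrite ?mulr1 ?mulr0.
rewrite qfZ /qf !mulmxA -colE -mulmxA -rowE mxE big_ord1.
by rewrite /adj !mxE.
Qed.

Definition sqcoord M x j := conjc ((M *m x) j 0) * (M *m x) j 0.

Lemma sqcoord_ge0 M x j : 0 <= sqcoord M x j.
Proof. by rewrite /sqcoord mulrC mulcJ_ge0. Qed.

Lemma sum_sqcoord M x : adj M *m M = 1%:M -> \sum_j sqcoord M x j = sqnorm x.
Proof.
move=> M_unitary; rewrite -qf1 -M_unitary -(mulmx1 (adj M)) qf_adj_mul qf1 mxE.
by apply: eq_bigr => j _; rewrite /sqcoord /adj !mxE.
Qed.

Lemma sqcoord_adj_delta M j0 j : M *m adj M = 1%:M ->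
  sqcoord M (adj M *m delta_mx j0 (0 : 'I_1)) j = (j == j0)%:R.
Proof.
move=> M_unitary; rewrite /sqcoord mulmxA M_unitary mul1mx !mxE eqxx andbT.
by rewrite conjc_nat -natrM; case: (j == j0).
Qed.

Lemma sum_sqcoord_adj_delta M (f : 'I_n -> R[i]) j0 : M *m adj M = 1%:M ->
  \sum_j f j * sqcoord M (adj M *m delta_mx j0 (0 : 'I_1)) j = f j0.
Proof.
move=> M_unitary; under eq_bigr do rewrite sqcoord_adj_delta //.
by rewrite (bigD1 j0) //= eqxx mulr1 big1 ?addr0 // => j /negbTE ->; rewrite mulr0.
Qed.

Lemma sqnorm_adj_delta M j0 : M *m adj M = 1%:M ->
  sqnorm (adj M *m delta_mx j0 (0 : 'I_1)) = 1.
Proof.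
move=> M_unitary; rewrite -(sum_sqcoord _ (mulmx1C M_unitary)).
by under eq_bigr do rewrite -[sqcoord _ _ _]mul1r; rewrite (sum_sqcoord_adj_delta (fun=> 1)).
Qed.

Lemma sum_sqcoord_ge_min M (f : 'I_n -> R) x : adj M *m M = 1%:M ->
  (minI f)%:C * sqnorm x <= \sum_j (f j)%:C * sqcoord M x j.
Proof.
move=> M_unitary; rewrite -(sum_sqcoord _ M_unitary) mulr_sumr; apply: ler_sum => j _.
by rewrite ler_wpM2r ?sqcoord_ge0 // lecR minI_le.
Qed.

Lemma sum_sqcoord_le_max M (f : 'I_n -> R) x : adj M *m M = 1%:M ->
  \sum_j (f j)%:C * sqcoord M x j <= (maxI f)%:C * sqnorm x.
Proof.
move=> M_unitary; rewrite -(sum_sqcoord _ M_unitary) mulr_sumr; apply: ler_sum => j _.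
by rewrite ler_wpM2r ?sqcoord_ge0 // lecR maxI_ge.
Qed.

End QuadraticForm.

Section HermitianMinEigenvalue.
Variables (R : realType) (n : nat) (A : 'M[R[i]]_n).
Hypotheses (n_gt0 : (0 < n)%N) (A_herm : adj A = A).

Let P := spectralmx A.
Let d (j : 'I_n) : R := complex.Re (spectral_diag A 0 j).

Lemma spectral_mul_adj : P *m adj P = 1%:M.
Proof. by rewrite -adj_tstar; apply/unitarymxP; exact: spectral_unitarymx. Qed.

Lemma adj_mul_spectral : adj P *m P = 1%:M.
Proof. exact: mulmx1C spectral_mul_adj. Qed.

Lemma hermitian_spectral_decomposition :
  A = adj P *m diag_mx (\row_j (d j)%:C) *m P.
Proof.
have A_hsym : A \is hermsymmx by rewrite is_hermitianmxE expr0 scale1r adj_tstar A_herm.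
have diag_real : spectral_diag A = \row_j (d j)%:C.
  apply/rowP => j; rewrite mxE RRe_real //.
  by have /mxOverP := hermitian_spectral_diag_real A_hsym; apply.
have P_inv : invmx P = adj P.
  by rewrite invmx_unitary ?spectral_unitarymx // adj_tstar.
by rewrite -diag_real -P_inv; apply/orthomx_spectralP/hermitian_normalmx.
Qed.

Lemma qf_spectral x : qf x A = \sum_j (d j)%:C * sqcoord P x j.
Proof.
rewrite {1}hermitian_spectral_decomposition qf_adj_mul /qf /sqcoord.
rewrite mxE; apply: eq_bigr => j _; rewrite mul_mx_diag !mxE; ring.
Qed.

Lemma eigenvalue_ge_min_spectral a : eigenvalue A a -> (minI d)%:C <= a.
Proof.
case/eigenvalueP => v vA v_neq0; set w := v *m adj P.
have wD : w *m diag_mx (\row_j (d j)%:C) = a *: w.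
  move/(congr1 (mulmx^~ (adj P))): vA.
  rewrite {1}hermitian_spectral_decomposition !mulmxA -(mulmxA _ P) spectral_mul_adj.
  by rewrite mulmx1 -scalemxAl.
have w_neq0 : w != 0.
  apply: contraNneq v_neq0 => w0.
  by rewrite -[v]mulmx1 -adj_mul_spectral mulmxA -/w w0 mul0mx.
clearbody w; have [j w_j] : exists j, w 0 j != 0.
  case: (pickP (fun j => w 0 j != 0)) => [j ?|w0]; first by exists j.
  case/eqP: w_neq0; apply/matrixP => ? k; rewrite ord1 [RHS]mxE.
  by move/negbFE/eqP: (w0 k).
move/matrixP/(_ 0 j): wD; rewrite mul_mx_diag !mxE mulrC => /(mulIf w_j) <-.
by rewrite lecR minI_le.
Qed.

Lemma qf_ge_min_spectral x : (minI d)%:C * sqnorm x <= qf x A.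
Proof. by rewrite qf_spectral; exact: sum_sqcoord_ge_min adj_mul_spectral. Qed.

Lemma min_spectral_eigenvalue : eigenvalue A (minI d)%:C.
Proof.
have [j0 ->] := minI_attained d n_gt0; apply/eigenvalueP; exists (row j0 P).
  rewrite {1}hermitian_spectral_decomposition !mulmxA -row_mul spectral_mul_adj row1.
  by rewrite -rowE row_diag_mx mxE -scalemxAl -rowE.
apply/eqP => /(congr1 (mulmx^~ (adj P))).
rewrite mul0mx -row_mul spectral_mul_adj row1 => /matrixP/(_ 0 j0).
by rewrite !mxE !eqxx => /eqP; rewrite oner_eq0.
Qed.

Lemma min_spectral_attained : exists x, sqnorm x = 1 /\ qf x A = (minI d)%:C.
Proof.
have [j0 ->] := minI_attained d n_gt0.
exists (adj P *m delta_mx j0 0); rewrite sqnorm_adj_delta ?spectral_mul_adj //.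
by rewrite qf_spectral sum_sqcoord_adj_delta ?spectral_mul_adj.
Qed.

Lemma hermitian_min_eigenvalue : exists l : R,
  [/\ is_min_eigenvalue A l, forall x, l%:C * sqnorm x <= qf x A
    & exists x, sqnorm x = 1 /\ qf x A = l%:C].
Proof.
exists (minI d); split; [split | exact: qf_ge_min_spectral | exact: min_spectral_attained].
  exact: min_spectral_eigenvalue.
exact: eigenvalue_ge_min_spectral.
Qed.

End HermitianMinEigenvalue.

Section TwoBasisRayleigh.
Variables (R : realType) (n : nat) (M1 M2 S : 'M[R[i]]_n) (f1 f2 : 'I_n -> R).
Hypotheses (M1_unitary : M1 *m adj M1 = 1%:M) (M2_unitary : M2 *m adj M2 = 1%:M).
Hypothesis qf_S : forall x, qf x S =
  \sum_j ((f1 j)%:C * sqcoord M1 x j + (f2 j)%:C * sqcoord M2 x j).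

Lemma qf_ge_min_add_min x : (minI f1 + minI f2)%:C * sqnorm x <= qf x S.
Proof.
rewrite qf_S big_split realcD mulrDl /=.
by rewrite lerD // sum_sqcoord_ge_min // mulmx1C.
Qed.

Lemma rayleigh_bound_le_min_add_max l : (0 < n)%N ->
  (forall x, l%:C * sqnorm x <= qf x S) -> l <= minI f1 + maxI f2.
Proof.
move=> n_gt0 l_le; have [j0 f1_j0] := minI_attained f1 n_gt0.
have := l_le (adj M1 *m delta_mx j0 0).
rewrite sqnorm_adj_delta // mulr1 qf_S big_split /=.
rewrite (sum_sqcoord_adj_delta (fun j => (f1 j)%:C)) // -f1_j0 -lecR realcD.
move/le_trans; apply; rewrite lerD2l -[X in _ <= X]mulr1.
by rewrite -(sqnorm_adj_delta j0 M1_unitary) sum_sqcoord_le_max // mulmx1C.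
Qed.

End TwoBasisRayleigh.

Section FourierProjectors.
Variables (R : realType) (N : nat).
Implicit Types (x : 'cV[R[i]]_N) (m : 'I_N).

Lemma qf_Qmx x m : qf x (Qmx m) = (cc m)%:C * sqcoord Vmx x m.
Proof. by rewrite qf_adj_mul qf_single. Qed.

Lemma qf_Qhmx x m : qf x (Qhmx m) = (cch m)%:C * sqcoord Vhmx x m.
Proof. by rewrite qf_adj_mul qf_single. Qed.

Lemma qf_Qmx_ge0 x m : 0 <= qf x (Qmx m).
Proof. by rewrite qf_Qmx mulr_ge0 ?sqcoord_ge0 // ler0c sqrtr_ge0. Qed.

Lemma qf_Qhmx_ge0 x m : 0 <= qf x (Qhmx m).
Proof. by rewrite qf_Qhmx mulr_ge0 ?sqcoord_ge0 // ler0c sqrtr_ge0. Qed.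

Lemma adj_Qmx m : adj (@Qmx R N m) = Qmx m.
Proof. by rewrite /Qmx !adjM adjK adj_single mulmxA. Qed.

Lemma adj_Qhmx m : adj (@Qhmx R N m) = Qhmx m.
Proof. by rewrite /Qhmx !adjM adjK adj_single mulmxA. Qed.

End FourierProjectors.

Section InterferenceMatrix.
Variables (R : realType) (N K : nat) (i : 'I_K) (s : 'I_K -> 'cV[R[i]]_N).

Definition lambda (m : 'I_N) : R :=
  cc m * complex.Re (\sum_(k < K | k != i) qf (s k) (Qmx m)).
Definition lambda_hat (m : 'I_N) : R :=
  cch m * complex.Re (\sum_(k < K | k != i) qf (s k) (Qhmx m)).
Definition interference_mx : 'M[R[i]]_N := \sum_(k < K | k != i) \sum_(m < N)
  (qf (s k) (Qmx m) *: Qmx m + qf (s k) (Qhmx m) *: Qhmx m).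

Lemma lambdaC m : (lambda m)%:C = (\sum_(k < K | k != i) qf (s k) (Qmx m)) * (cc m)%:C.
Proof. by rewrite mulrC; apply: realcM_Re; apply: sumr_ge0 => k _; exact: qf_Qmx_ge0. Qed.

Lemma lambda_hatC m :
  (lambda_hat m)%:C = (\sum_(k < K | k != i) qf (s k) (Qhmx m)) * (cch m)%:C.
Proof. by rewrite mulrC; apply: realcM_Re; apply: sumr_ge0 => k _; exact: qf_Qhmx_ge0. Qed.

Lemma qf_interference_mx x : qf x interference_mx =
  \sum_m ((lambda m)%:C * sqcoord Vmx x m + (lambda_hat m)%:C * sqcoord Vhmx x m).
Proof.
rewrite /interference_mx exchange_big /= qf_sum; apply: eq_bigr => m _.
rewrite big_split /= -!scaler_suml qfD !qfZ (qf_Qmx x m) (qf_Qhmx x m).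
by congr (_ + _); rewrite mulrA; [rewrite -(lambdaC m) | rewrite -(lambda_hatC m)].
Qed.

Lemma adj_interference_mx : adj interference_mx = interference_mx.
Proof.
rewrite adj_sum; apply: eq_bigr => k _; rewrite adj_sum; apply: eq_bigr => m _.
rewrite adjD !adjZ adj_Qmx adj_Qhmx.
by rewrite (ger0_conjc (qf_Qmx_ge0 (s k) m)) (ger0_conjc (qf_Qhmx_ge0 (s k) m)).
Qed.

Lemma sum_Smik x :
  \sum_(k < K | k != i) \sum_(m < N) Smik x (s k) m = qf x interference_mx.
Proof.
rewrite qf_sum; apply: eq_bigr => k _; rewrite qf_sum; apply: eq_bigr => m _.
by rewrite qfD !qfZ /Smik (mulrC (qf x (Qmx m))) (mulrC (qf x (Qhmx m))).
Qed.

Lemma min_lambda_add_ge0 : (0 < N)%N -> 0 <= minI lambda + minI lambda_hat.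
Proof.
move=> N_gt0; rewrite addr_ge0 // minI_ge // => m.
  by rewrite mulr_ge0 ?sqrtr_ge0 ?ger0_Re ?sumr_ge0 // => k _; exact: qf_Qmx_ge0.
by rewrite mulr_ge0 ?sqrtr_ge0 ?ger0_Re ?sumr_ge0 // => k _; exact: qf_Qhmx_ge0.
Qed.

Lemma interference_rayleigh_bounds l : (0 < N)%N ->
    (forall x, l%:C * sqnorm x <= qf x interference_mx) ->
    (exists x, sqnorm x = 1 /\ qf x interference_mx = l%:C) ->
  minI lambda + minI lambda_hat <= l <=
    Num.min (minI lambda + maxI lambda_hat) (maxI lambda + minI lambda_hat).
Proof.
move=> N_gt0 l_le [x [x_unit qf_x]].
have qf_swap y : qf y interference_mx =
    \sum_m ((lambda_hat m)%:C * sqcoord Vhmx y m + (lambda m)%:C * sqcoord Vmx y m).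
  by rewrite qf_interference_mx; apply: eq_bigr => m _; exact: addrC.
apply/andP; split.
  have := qf_ge_min_add_min (Vmx_mul_adj R N) (Vhmx_mul_adj R N) qf_interference_mx x.
  by rewrite x_unit mulr1 qf_x lecR.
rewrite le_min (rayleigh_bound_le_min_add_max (Vmx_mul_adj R N) (Vhmx_mul_adj R N)
  qf_interference_mx N_gt0 l_le) [maxI _ + _]addrC.
exact: (rayleigh_bound_le_min_add_max (Vhmx_mul_adj R N) (Vmx_mul_adj R N) qf_swap).
Qed.

End InterferenceMatrix.

Section SphereMaximum.
Variables (R : realType) (n : nat).

Lemma inv_sqrt_le (u v : R) : 0 < u -> u <= v -> (Num.sqrt v)^-1 <= (Num.sqrt u)^-1.
Proof.
move=> u_gt0 uv; have v_gt0 := lt_le_trans u_gt0 uv.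
by rewrite lef_pV2 ?posrE ?sqrtr_gt0 // ler_sqrt // ltW.
Qed.

Lemma inv_sqrt_div_add_le (a b u v : R) : 0 < a -> 0 < b -> 0 <= u -> u <= v ->
  (Num.sqrt (v / a + b))^-1 <= (Num.sqrt (u / a + b))^-1.
Proof.
move=> a_gt0 b_gt0 u_ge0 uv; apply: inv_sqrt_le.
  by apply: ltr_wpDl b_gt0; rewrite divr_ge0 // ltW.
by rewrite lerD2r ler_wpM2r // invr_ge0 ltW.
Qed.

Lemma eq_is_max_on_sphere (f g : 'cV[R[i]]_n -> R) M :
  f =1 g -> is_max_on_sphere g M -> is_max_on_sphere f M.
Proof.
move=> fg [[x [x_n gx]] g_le]; split=> [|y]; first by exists x; rewrite fg.
by rewrite fg; exact: g_le.
Qed.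

Lemma inv_sqrt_qf_max_on_sphere (S : 'M[R[i]]_n) (l c b : R) :
    0 <= c -> 0 < b -> 0 <= l ->
    (forall x, l%:C * sqnorm x <= qf x S) ->
    (exists x, sqnorm x = 1 /\ qf x S = l%:C) ->
  is_max_on_sphere (fun x => (Num.sqrt (c * complex.Re (qf x S) + b))^-1)
    ((Num.sqrt (c * (l * n%:R) + b))^-1).
Proof.
move=> c_ge0 b_gt0 l_ge0 l_le [x [x_unit qf_x]].
split=> [|y y_n].
  pose r := Num.sqrt (n%:R : R); have rr : r * r = n%:R by rewrite -expr2 sqr_sqrtr.
  exists (r%:C *: x); rewrite -qf1 !qfZl qf1 x_unit qf_x conjc_real -!realcM rr.
  by rewrite mulr1 realc_nat; split=> //=; rewrite [n%:R * l]mulrC.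
apply: inv_sqrt_le; first by rewrite ltr_wpDl // !mulr_ge0.
rewrite lerD2r ler_wpM2l //.
by have := l_le y; rewrite y_n -realc_nat -realcM lecE => /andP[].
Qed.

End SphereMaximum.

Theorem mainTheorem2 (R : realType) (N K : nat) (N0 P T : R) (i : 'I_K)
    (s : 'I_K -> 'cV[R[i]]_N) :
  (2 <= N)%N -> (2 <= K)%N -> 0 < N0 -> 0 < P -> 0 < T ->
  let lam := fun m : 'I_N =>
    cc m * complex.Re (\sum_(k < K | k != i) qf (s k) (Qmx m)) in
  let lamh := fun m : 'I_N =>
    cch m * complex.Re (\sum_(k < K | k != i) qf (s k) (Qhmx m)) in
  let Sigma : 'M[R[i]]_N := \sum_(k < K | k != i) \sum_(m < N)
    (qf (s k) (Qmx m) *: Qmx m + qf (s k) (Qhmx m) *: Qhmx m) in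
  let noise := N0 / (2 * P * T) in
  let obj := fun x : 'cV[R[i]]_N =>
    (Num.sqrt (1 / (6 * (N%:R) ^+ 2) *
       complex.Re (\sum_(k < K | k != i) \sum_(m < N) Smik x (s k) m)
       + noise))^-1 in
  let gamma := Num.min (minI lam + maxI lamh) (maxI lam + minI lamh) in
  exists lmin : R,
    is_min_eigenvalue Sigma lmin /\
    minI lam + minI lamh <= lmin <= gamma /\
    exists SINRstar : R,
      is_max_on_sphere obj SINRstar /\
      (Num.sqrt (gamma / (6 * N%:R) + noise))^-1 <= SINRstar /\
      SINRstar <= (Num.sqrt ((minI lam + minI lamh) / (6 * N%:R) + noise))^-1.
Proof.
move=> N_ge2 _ N0_gt0 P_gt0 T_gt0 lam lamh Sigma noise obj gamma.
have N_gt0 : (0 < N)%N by apply: leq_trans N_ge2.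
have sixN_gt0 : 0 < 6 * N%:R :> R by rewrite mulr_gt0 ?ltr0n.
have noise_gt0 : 0 < noise by rewrite divr_gt0 // !mulr_gt0.
have [l [l_min l_le l_attained]] :=
  hermitian_min_eigenvalue N_gt0 (adj_interference_mx i s).
have /andP[l_ge l_le_gamma] := interference_rayleigh_bounds N_gt0 l_le l_attained.
have min_ge0 := min_lambda_add_ge0 i s N_gt0.
have l_ge0 : 0 <= l := le_trans min_ge0 l_ge.
exists l; split=> //; split; first exact/andP.
exists ((Num.sqrt (l / (6 * N%:R) + noise))^-1); split; last first.
  by split; apply: inv_sqrt_div_add_le.
have c_ge0 : 0 <= 1 / (6 * N%:R ^+ 2) :> R by rewrite divr_ge0 ?mulr_ge0 ?ler0n.
have -> : l / (6 * N%:R) = 1 / (6 * N%:R ^+ 2) * (l * N%:R).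
  by field; rewrite pnatr_eq0 -lt0n.
apply: eq_is_max_on_sphere (inv_sqrt_qf_max_on_sphere c_ge0 noise_gt0 l_ge0 l_le l_attained).
by move=> x; rewrite /obj sum_Smik.
Qed.
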